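(* Every topological space with the countable chain condition (CCC) is selectively $2$-star-ccc.
   Context: No separation axioms are assumed. A space has the CCC if every pairwise disjoint family of open sets is countable. For $B\subseteq X$ and a family $\mathcal{U}$ of subsets of $X$: $\operatorname{st}^1(B,\mathcal{U})=\bigcup\{U\in\mathcal{U}:U\cap B\neq\emptyset\}$ and $\operatorname{st}^{2}(B,\mathcal{U})=\bigcup\{U\in\mathcal{U}:U\cap\operatorname{st}^1(B,\mathcal{U})\neq\emptyset\}$. A space $X$ is selectively $2$-star-ccc if for every open cover $\mathcal{U}$ of $X$ and every sequence $(\mathcal{A}_n:n\in\omega)$ of maximal pairwise disjoint families of open subsets of $X$, there is a sequence $(A_n\in\mathcal{A}_n:n\in\omega)$ with $\operatorname{st}^2(\bigcup_{n\in\omega}A_n,\mathcal{U})=X$. *)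

(* spaces are [topologicalType]s (no separation axioms). *)
From HB Require Import structures.
From mathcomp Require Import all_boot.
From mathcomp Require Import boolp classical_sets cardinality topology.
Set Implicit Arguments. Unset Strict Implicit. Unset Printing Implicit Defensive.
Local Open Scope classical_set_scope.

Section Defs.
Context {T : topologicalType}.

Definition disjoint_open_family (F : set (set T)) : Prop :=
  (forall A, F A -> open A) /\
  (forall A B, F A -> F B -> A <> B -> A `&` B = set0).

Definition ccc : Prop :=
  forall F : set (set T), disjoint_open_family F -> countable F.

Definition maximal_disjoint_open_family (F : set (set T)) : Prop :=
  disjoint_open_family F /\
  (forall G : set (set T), disjoint_open_family G -> F `<=` G -> G = F).

Definition open_cover (U : set (set T)) : Prop :=
  (forall V, U V -> open V) /\ \bigcup_(V in U) V = setT.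

Definition st1 (B : set T) (U : set (set T)) : set T :=
  \bigcup_(V in [set V | U V /\ V `&` B !=set0]) V.

Definition st2 (B : set T) (U : set (set T)) : set T :=
  \bigcup_(V in [set V | U V /\ V `&` st1 B U !=set0]) V.

Definition selectively_2_star_ccc : Prop :=
  forall (U : set (set T)) (A : nat -> set (set T)),
    open_cover U ->
    (forall n, maximal_disjoint_open_family (A n)) ->
    exists a : nat -> set T,
      (forall n, A n (a n)) /\ st2 (\bigcup_n a n) U = setT.

End Defs.

From mathcomp Require Import all_boot.
From mathcomp Require Import boolp classical_sets cardinality topology.

(* Take a maximal pairwise disjoint family E of nonempty open sets each lying
   inside some member of the cover U; by the CCC, E is countable, so its
   members can be listed as W_0, W_1, ... and a_n can be chosen in A_n to meet
   W_n (maximal disjoint families meet every nonempty open set).  Given x,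
   pick V in U containing x; by maximality V meets some W_n, and W_n lies in
   some V' in U.  Then V' meets a_n, so V' is in st^1, and V meets V' inside
   W_n, so x is in st^2. *)

Set Implicit Arguments.
Unset Strict Implicit.
Unset Printing Implicit Defensive.
Local Open Scope classical_set_scope.

Lemma maximal_disjoint_subcollection_meets {T : Type} (D E : set (set T))
    (V : set T) :
  maximal_disjoint_subcollection id E D -> D V -> V !=set0 ->
  exists2 W, E W & V `&` W !=set0.
Proof.
move=> [ED tE maxE] DV V0; apply: contrapT => noW.
have EV : ~ E V by move=> EV; apply: noW; exists V; rewrite ?setIid.
apply: (maxE (E `|` [set V])).
- by split; [move=> ? ?; left | move=> EVE; apply: EV; apply: EVE; right].
- by move=> W [/ED //| ->].
- move=> W W' [EW|->] [EW'|->] WW' //; first exact: tE.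
  + by exfalso; apply: noW; exists W; rewrite // setIC.
  + by exfalso; apply: noW; exists W'.
Qed.

Section disjoint_open_families.
Context {T : topologicalType}.
Implicit Types (F E : set (set T)) (W : set T).

Lemma trivIset_disjoint_open_family E :
  (forall W, E W -> open W) -> trivIset E id -> disjoint_open_family E.
Proof.
move=> Eo tE; split=> // W W' EW EW' WW'.
by apply/nonemptyPn => /(tE _ _ EW EW').
Qed.

Lemma maximal_disjoint_open_family_mem F W :
  maximal_disjoint_open_family F -> open W ->
  (forall A, F A -> A `&` W = set0) -> F W.
Proof.
move=> [[Fo Fd] Fmax] oW FW0.
suff <- : F `|` [set W] = F by right.
apply: Fmax; last by move=> ? ?; left.
split; first by move=> A [/Fo //| ->].
move=> A B [FA|->] [FB|->] AB //; first exact: Fd.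
- exact: FW0.
- by rewrite setIC; apply: FW0.
Qed.

Lemma maximal_disjoint_open_family_set0 F :
  maximal_disjoint_open_family F -> F set0.
Proof.
move=> Fmax.
by apply: maximal_disjoint_open_family_mem Fmax open0 _ => A _; rewrite setI0.
Qed.

Lemma maximal_disjoint_open_family_meets F W :
  maximal_disjoint_open_family F -> open W -> W !=set0 ->
  exists2 A, F A & A `&` W !=set0.
Proof.
move=> Fmax oW W0; apply: contrapT => noA.
have FW : F W.
  apply: maximal_disjoint_open_family_mem => // A FA.
  by apply/nonemptyPn => AW; apply: noA; exists A.
by apply: noA; exists W; rewrite ?setIid.
Qed.

Lemma select_meeting_countable E (A : nat -> set (set T)) :
  countable E -> (forall W, E W -> open W /\ W !=set0) ->
  (forall n, maximal_disjoint_open_family (A n)) ->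
  exists a : nat -> set T,
    (forall n, A n (a n)) /\ forall W, E W -> exists n, a n `&` W !=set0.
Proof.
move=> /countable_injP[f finj] Eopen Amax.
have stage n : exists a, A n a /\ forall W, E W -> f W = n -> a `&` W !=set0.
  have [[W EW fW]|noW] := pselect (exists2 W, E W & f W = n).
    have [oW W0] := Eopen _ EW.
    have [a Aa aW] := maximal_disjoint_open_family_meets (Amax n) oW W0.
    exists a; split=> // W' EW' fW'.
    by rewrite (finj W' W) ?inE // fW fW'.
  exists set0; split; first exact: maximal_disjoint_open_family_set0.
  by move=> W EW fW; case: noW; exists W.
have [a aP] := choice stage.
exists a; split=> [n | W EW]; first exact: (aP n).1.
by exists (f W); apply: (aP (f W)).2.
Qed.

Lemma sub_st2 (U : set (set T)) (B W V V' : set T) :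
  U V -> U V' -> W `<=` V' -> B `&` W !=set0 -> V `&` W !=set0 ->
  V `<=` st2 B U.
Proof.
move=> UV UV' WV' BW VW x Vx; exists V => //; split=> //.
have [y [Vy Wy]] := VW; exists y; split=> //.
exists V'; last exact: WV'.
by split=> //; rewrite setIC; apply: subsetI_neq0 BW.
Qed.

End disjoint_open_families.

Theorem corollary4 (T : topologicalType) :
  @ccc T -> @selectively_2_star_ccc T.
Proof.
move=> Tccc U A [Uo Ucov] Amax.
pose D := [set W : set T | [/\ open W, W !=set0 & exists2 V, U V & W `<=` V]].
have [E Emax] := ex_maximal_disjoint_subcollection id D.
have [ED tE _] := Emax.
have Eopen W : E W -> open W /\ W !=set0 by move=> /ED[].
have cE : countable E.
  by apply/Tccc/trivIset_disjoint_open_family => // W /Eopen[].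
have [a [Aa aE]] := select_meeting_countable cE Eopen Amax.
exists a; split=> //; apply/seteqP; split=> // x _.
have [V UV Vx] : (\bigcup_(V in U) V) x by rewrite Ucov.
have DV : D V by split; [exact: Uo | exists x | exists V].
have [W EW VW] := maximal_disjoint_subcollection_meets Emax DV (ex_intro _ x Vx).
have [_ _ [V' UV' WV']] := ED _ EW.
have [n anW] := aE _ EW.
apply: (sub_st2 UV UV' WV' _ VW Vx).
by apply: subsetI_neq0 anW => // y any; exists n.
Qed.
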